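(* In the half-line setting, let $\mathcal{S}=\{j\ge0:r_j>0\}=\{j_1<j_2<\cdots\}$ (finite or infinite). For each $k$ such that $j_{k+1}$ exists define $$\eta_k=(-1)^{j_k}Q_{j_k}\Big(-\sqrt{\tfrac{p_{j_k}\tilde q_{j_k}}{r_{j_k}}}\,|j_k;O\rangle+\sqrt{\tilde q_{j_k}}\,|j_k;R\rangle\Big)+\sum_{l=j_k+1}^{j_{k+1}-1}(-1)^lQ_l\big(-\sqrt{p_l}|l;L\rangle+\sqrt{q_l}|l;R\rangle\big)+(-1)^{j_{k+1}}Q_{j_{k+1}}\Big(-\sqrt{p_{j_{k+1}}}\,|j_{k+1};L\rangle+\sqrt{\tfrac{p_{j_{k+1}}q_{j_{k+1}}}{r_{j_{k+1}}}}\,|j_{k+1};O\rangle\Big),$$ and, if $|\mathcal{S}|=n<\infty$, define the formal vector $$\eta_n=(-1)^{j_n}Q_{j_n}\Big(-\sqrt{\tfrac{p_{j_n}\tilde q_{j_n}}{r_{j_n}}}\,|j_n;O\rangle+\sqrt{\tilde q_{j_n}}\,|j_n;R\rangle\Big)+\sum_{l=j_n+1}^{\infty}(-1)^lQ_l\big(-\sqrt{p_l}|l;L\rangle+\sqrt{q_l}|l;R\rangle\big).$$ Then a vector $\phi\in\ell^2(A)$ lies in $\mathcal{H}^{(S)}$ if and only if $\phi=\sum_k c_k\eta_k$ (coefficientwise; each arc lies in the support of at most two $\eta_k$) for some complex numbers $c_k$. In particular $\mathcal{H}^{(S)}=\{0\}$ if $\mathcal{S}=\emptyset$. Moreover every $\eta_k$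 that belongs to $\ell^2(A)$ satisfies $U\eta_k=-\eta_k$.
   Context: Half-line setting: $V=\mathbb{Z}_+$, parameters $p_j,q_j,r_j\ge0$ with $p_j+q_j+r_j=1$, $q_0=0$, $p_j>0$ ($j\ge0$), $q_j>0$ ($j\ge1$). Arcs: $|j;R\rangle=\delta_{(j+1,j)}$ ($j\ge0$), $|j;L\rangle=\delta_{(j-1,j)}$ ($j\ge1$), $|j;O\rangle=\delta_{(j,j)}$ when $r_j>0$; arc $(u,v)$ goes from $v$ to $u$. Shift $S$: $|j;R\rangle\leftrightarrow|j+1;L\rangle$, $|j;O\rangle\mapsto|j;O\rangle$. $a_j=\sqrt{q_j}|j;L\rangle+\sqrt{r_j}|j;O\rangle+\sqrt{p_j}|j;R\rangle$, $b_j=Sa_j$. $\Pi_A$ is the orthogonal projection onto the closed span of $\{a_j\}$, $C=2\Pi_A-I$, $U=SC$. $\mathcal{H}^{(R)}$ is the closed span of $\{a_j,b_j:j\ge0\}$ and $\mathcal{H}^{(S)}=(\mathcal{H}^{(R)})^\perp$. $Q_0=1$ and $Q_j=\sqrt{\frac{q_1\cdots q_j}{p_1\cdots p_j\,q_j}}$ for $j\ge1$; $\tilde q_j=q_j$ for $j\ge1$ and $\tilde q_0=1$. *)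

From Stdlib Require Import Reals List.
Open Scope R_scope.

Record Cplx := mkC { Re : R ; Im : R }.
Definition C0 : Cplx := mkC 0 0.
Definition RtoC (x : R) : Cplx := mkC x 0.
Definition Cadd (z w : Cplx) : Cplx := mkC (Re z + Re w) (Im z + Im w).
Definition Copp (z : Cplx) : Cplx := mkC (- Re z) (- Im z).
Definition Csub (z w : Cplx) : Cplx := Cadd z (Copp w).
Definition Cmul (z w : Cplx) : Cplx :=
  mkC (Re z * Re w - Im z * Im w) (Re z * Im w + Im z * Re w).
Definition Cconj (z : Cplx) : Cplx := mkC (Re z) (- Im z).
Definition Cnorm2 (z : Cplx) : R := Re z * Re z + Im z * Im z.
Fixpoint Csum (f : nat -> Cplx) (n : nat) : Cplx :=
  match n with O => f O | S m => Cadd (Csum f m) (f (S m)) end.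
Fixpoint Csum_lt (f : nat -> Cplx) (n : nat) : Cplx :=
  match n with O => C0 | S m => Cadd (Csum_lt f m) (f m) end.

(* arc (j, DL) = |j;L>, (j, DO) = |j;O>, (j, DR) = |j;R> *)
Inductive dir := DL | DO | DR.

(* a vector on the arc set: only meaningful on valid arcs *)
Definition vec := nat -> dir -> Cplx.

Definition vadd (u v : vec) : vec := fun j d => Cadd (u j d) (v j d).
Definition vsub (u v : vec) : vec := fun j d => Csub (u j d) (v j d).
Definition vopp (u : vec) : vec := fun j d => Copp (u j d).
Definition vscale (c : Cplx) (u : vec) : vec := fun j d => Cmul c (u j d).
Definition vzero : vec := fun _ _ => C0.
Definition vR (u : nat -> dir -> R) : vec := fun j d => RtoC (u j d).

Definition dsum (f : dir -> R) : R := f DL + f DO + f DR.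
Definition dsumC (f : dir -> Cplx) : Cplx := Cadd (Cadd (f DL) (f DO)) (f DR).

Definition shift (u : vec) : vec := fun j d =>
  match d with
  | DR => u (S j) DL
  | DL => match j with O => C0 | S j' => u j' DR end
  | DO => u j DO
  end.

Definition posb (x : R) : bool := if Rlt_dec 0 x then true else false.

Section HalfLine.
Variables p q r : nat -> R.

Definition valid_arc (j : nat) (d : dir) : Prop :=
  match d with DL => (1 <= j)%nat | DO => 0 < r j | DR => True end.

(* l^2(A): supported on arcs, square summable (bounded partial sums) *)
Definition norm2_partial (u : vec) (n : nat) : R :=
  sum_f_R0 (fun j => dsum (fun d => Cnorm2 (u j d))) n.
Definition in_l2 (u : vec) : Prop :=
  (forall j d, ~ valid_arc j d -> u j d = C0) /\
  exists B, forall n, norm2_partial u n <= B.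

Definition norm2_le (u : vec) (e : R) : Prop := forall n, norm2_partial u n <= e.

Definition inner_partial (u v : vec) (n : nat) : Cplx :=
  Csum (fun j => dsumC (fun d => Cmul (Cconj (u j d)) (v j d))) n.
Definition ortho (u v : vec) : Prop :=
  Un_cv (fun n => Re (inner_partial u v n)) 0 /\
  Un_cv (fun n => Im (inner_partial u v n)) 0.

Definition a_vec (j : nat) : vec := vR (fun l d =>
  if Nat.eqb l j then
    match d with DL => sqrt (q j) | DO => sqrt (r j) | DR => sqrt (p j) end
  else 0).
Definition b_vec (j : nat) : vec := shift (a_vec j).

Definition comb_a (c : nat -> Cplx) (N : nat) : vec := fun l d =>
  Csum_lt (fun j => Cmul (c j) (a_vec j l d)) N.
Definition comb_ab (c e : nat -> Cplx) (N : nat) : vec := fun l d =>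
  Csum_lt (fun j => Cadd (Cmul (c j) (a_vec j l d)) (Cmul (e j) (b_vec j l d))) N.

Definition in_span_A (u : vec) : Prop :=
  in_l2 u /\ forall eps, 0 < eps ->
    exists (c : nat -> Cplx) (N : nat), norm2_le (vsub u (comb_a c N)) eps.

Definition in_HR (u : vec) : Prop :=
  in_l2 u /\ forall eps, 0 < eps ->
    exists (c e : nat -> Cplx) (N : nat), norm2_le (vsub u (comb_ab c e N)) eps.

Definition in_HS (u : vec) : Prop :=
  in_l2 u /\ forall w, in_HR w -> ortho w u.

Definition is_projA (u w : vec) : Prop :=
  in_span_A w /\ forall x, in_span_A x -> ortho x (vsub u w).

Definition U_rel (u v : vec) : Prop :=
  exists w, is_projA u w /\
    forall j d, v j d = shift (vsub (vadd w w) u) j d.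

Fixpoint prod1 (f : nat -> R) (n : nat) : R :=
  match n with O => 1 | S m => prod1 f m * f (S m) end.
Definition Qc (j : nat) : R :=
  match j with O => 1 | _ => sqrt (prod1 q j / (prod1 p j * q j)) end.
Definition qt (j : nat) : R := match j with O => 1 | _ => q j end.
Definition sg (j : nat) : R := (-1) ^ j.

Definition no_S_between (j l : nat) : bool :=
  forallb (fun m => negb (posb (r m))) (seq (S j) (l - S j)).

(* eta j, for j = j_k in S: the vector eta_k of the paper.
   Its support runs from j_k to j_{k+1} if j_{k+1} exists (l = j_{k+1} is
   the first l > j with r_l > 0), and to infinity if j_k = j_n is the last
   element of S.  Zero if j is not in S. *)
Definition eta (j : nat) : nat -> dir -> R := fun l d =>
  if negb (posb (r j)) then 0 else
  if Nat.eqb l j then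
    match d with
    | DO => sg j * Qc j * (- sqrt (p j * qt j / r j))
    | DR => sg j * Qc j * sqrt (qt j)
    | DL => 0
    end
  else if andb (Nat.ltb j l) (no_S_between j l) then
    if posb (r l) then
      match d with
      | DL => sg l * Qc l * (- sqrt (p l))
      | DO => sg l * Qc l * sqrt (p l * q l / r l)
      | DR => 0
      end
    else
      match d with
      | DL => sg l * Qc l * (- sqrt (p l))
      | DR => sg l * Qc l * sqrt (q l)
      | DO => 0
      end
  else 0.

Definition etaC (j : nat) : vec := vR (eta j).

(* coefficientwise sum  sum_k c_k eta_k  (indexed by j_k); at an arc at vertex
   l only eta_{j} with j <= l can be nonzero, so the sum is over j <= l *)
Definition eta_comb (c : nat -> Cplx) : vec := fun l d =>
  Csum (fun j => Cmul (c j) (etaC j l d)) l.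

End HalfLine.

(* A vector phi lies in H^(S) = (H^(R))^perp exactly when it is
   orthogonal to every a_j and b_j, i.e. when its real and imaginary parts
   satisfy the local equations <a_j, f> = <b_j, f> = 0 at every vertex j
   ("balanced" fields): necessity because a_j, b_j lie in H^(R) and partial
   inner products with them are eventually constant; sufficiency by a
   weighted Cauchy-Schwarz bound, which passes orthogonality from finite
   combinations of the a_j, b_j to their norm closure.
   On the other side, each eta_i satisfies the vertex equation <a_j, eta_i> = 0
   and is shift invariant (its value on |l;R> equals its value on |l+1;L>,
   by the recursion for Q_l), which forces <b_j, eta_i> = 0 too.  A balanced
   field supported on the arcs is determined, by propagation along the line,
   by its values on the R arcs of the vertices of S; subtracting the matching
   combination of the eta_i therefore gives the representation phi = sum c_k
   eta_k.  Finally Pi_A eta_j = 0 (as eta_j is orthogonal to H^(R), which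
   contains the span of the a_j) and S eta_j = eta_j give U eta_j = -eta_j. *)

From Stdlib Require Import Reals Lra Lia List.
Open Scope R_scope.

(** Complex numbers and finite sums *)

Lemma Cext (z w : Cplx) : Re z = Re w -> Im z = Im w -> z = w.
Proof. destruct z, w; simpl; intros; subst; reflexivity. Qed.

Ltac Cring := apply Cext; simpl; ring.

Lemma Re_Csum (f : nat -> Cplx) n : Re (Csum f n) = sum_f_R0 (fun j => Re (f j)) n.
Proof. induction n as [|n IH]; simpl; [reflexivity|]. rewrite IH. reflexivity. Qed.

Lemma Im_Csum (f : nat -> Cplx) n : Im (Csum f n) = sum_f_R0 (fun j => Im (f j)) n.
Proof. induction n as [|n IH]; simpl; [reflexivity|]. rewrite IH. reflexivity. Qed.

Lemma sum_single (f : nat -> R) (j n : nat) :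
  (j <= n)%nat -> (forall l, l <> j -> f l = 0) -> sum_f_R0 f n = f j.
Proof.
  intros Hjn Hf. induction n as [|n IH].
  - replace j with 0%nat by lia. reflexivity.
  - destruct (Nat.eq_dec j (S n)) as [->|Hne]; simpl.
    + rewrite sum_eq_R0; [ring|]. intros k Hk. apply Hf. lia.
    + rewrite IH, (Hf (S n)) by lia. ring.
Qed.

Lemma Csum_lt_zero (f : nat -> Cplx) (N : nat) :
  (forall i, (i < N)%nat -> f i = C0) -> Csum_lt f N = C0.
Proof.
  intros Hf. induction N as [|N IH]; simpl; [reflexivity|].
  rewrite IH, (Hf N); [Cring | lia | intros i Hi; apply Hf; lia].
Qed.

Lemma Csum_lt_single (f : nat -> Cplx) (j N : nat) :
  (j < N)%nat -> (forall i, i <> j -> f i = C0) -> Csum_lt f N = f j.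
Proof.
  intros HjN Hf. induction N as [|N IH]; [lia|]. simpl.
  destruct (Nat.eq_dec j N) as [->|Hne].
  - rewrite Csum_lt_zero by (intros i Hi; apply Hf; lia). Cring.
  - rewrite IH, (Hf N) by lia. Cring.
Qed.

Lemma sum_le_support (f : nat -> R) (M : nat) :
  (forall l, 0 <= f l) -> (forall l, (M < l)%nat -> f l = 0) ->
  forall n, sum_f_R0 f n <= sum_f_R0 f M.
Proof.
  intros Hpos Hzero n. destruct (Compare_dec.le_lt_dec n M) as [Hle|Hlt].
  - destruct (Nat.eq_dec n M) as [->|Hne]; [lra|].
    rewrite (tech2 f n M) by lia.
    pose proof (cond_pos_sum (fun i => f (S n + i)%nat) (M - S n) (fun i => Hpos _)). lra.
  - induction n as [|n IH]; [lia|]. simpl. rewrite (Hzero (S n)) by lia.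
    destruct (Nat.eq_dec n M) as [->|Hne]; [lra|]. specialize (IH ltac:(lia)). lra.
Qed.

Lemma cv_eventually_const (U : nat -> R) (N : nat) (K : R) :
  Un_cv U 0 -> (forall n, (N <= n)%nat -> U n = K) -> K = 0.
Proof.
  intros Hcv HK. destruct (Req_dec K 0) as [|Hne]; [assumption|]. exfalso.
  destruct (Hcv (Rabs K)) as [N' HN']; [apply Rabs_pos_lt; assumption|].
  specialize (HN' (max N N') ltac:(lia)). rewrite HK in HN' by lia.
  unfold R_dist in HN'. rewrite Rminus_0_r in HN'. lra.
Qed.

(** Partial inner products and norms *)

Definition ReF (u : vec) : nat -> dir -> R := fun l d => Re (u l d).
Definition ImF (u : vec) : nat -> dir -> R := fun l d => Im (u l d).

Lemma inner_ext (x y u : vec) n :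
  (forall l d, x l d = y l d) -> inner_partial x u n = inner_partial y u n.
Proof.
  intros Hxy. unfold inner_partial.
  induction n as [|n IH]; cbn [Csum]; [|rewrite IH]; unfold dsumC; rewrite !Hxy; reflexivity.
Qed.

Lemma inner_zero_l (x u : vec) n : (forall l d, x l d = C0) -> inner_partial x u n = C0.
Proof.
  intros Hx. unfold inner_partial.
  induction n as [|n IH]; cbn [Csum]; [|rewrite IH]; unfold dsumC; rewrite !Hx; Cring.
Qed.

Lemma inner_add (x y u : vec) n :
  inner_partial (vadd x y) u n = Cadd (inner_partial x u n) (inner_partial y u n).
Proof.
  unfold inner_partial.
  induction n as [|n IH]; cbn [Csum]; [|rewrite IH]; unfold dsumC, vadd; Cring.
Qed.

Lemma inner_scale (z : Cplx) (x u : vec) n :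
  inner_partial (vscale z x) u n = Cmul (Cconj z) (inner_partial x u n).
Proof.
  unfold inner_partial.
  induction n as [|n IH]; cbn [Csum]; [|rewrite IH]; unfold dsumC, vscale; Cring.
Qed.

Definition ipR (h : vec) (g : nat -> dir -> R) (n : nat) : R :=
  sum_f_R0 (fun l => dsum (fun d => Re (h l d) * g l d)) n.

Lemma inner_real (h u : vec) n : (forall l d, Im (h l d) = 0) ->
  inner_partial h u n = mkC (ipR h (ReF u) n) (ipR h (ImF u) n).
Proof.
  intros Hh. unfold inner_partial, ipR.
  apply Cext; cbn [Re Im]; rewrite ?Re_Csum, ?Im_Csum; apply sum_eq; intros l _;
    unfold dsumC, dsum, ReF, ImF; simpl; rewrite !Hh; ring.
Qed.

Lemma norm2_ext (x y : vec) n :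
  (forall l d, x l d = y l d) -> norm2_partial x n = norm2_partial y n.
Proof. intros Hxy. unfold norm2_partial. apply sum_eq. intros l _. unfold dsum. rewrite !Hxy. reflexivity. Qed.

Lemma dsum_norm2_nonneg (f : dir -> Cplx) : 0 <= dsum (fun d => Cnorm2 (f d)).
Proof.
  unfold dsum, Cnorm2.
  pose proof (Rle_0_sqr (Re (f DL))); pose proof (Rle_0_sqr (Im (f DL)));
  pose proof (Rle_0_sqr (Re (f DO))); pose proof (Rle_0_sqr (Im (f DO)));
  pose proof (Rle_0_sqr (Re (f DR))); pose proof (Rle_0_sqr (Im (f DR))).
  unfold Rsqr in *. lra.
Qed.

Lemma norm2_nonneg (u : vec) n : 0 <= norm2_partial u n.
Proof. apply cond_pos_sum. intros l. apply dsum_norm2_nonneg. Qed.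

Lemma norm2_zero (x : vec) n : (forall l d, x l d = C0) -> norm2_partial x n = 0.
Proof.
  intros Hx. apply sum_eq_R0. intros l _. unfold dsum, Cnorm2. rewrite !Hx. simpl. ring.
Qed.

(* |a b + c e| <= ((a^2 + c^2)/s + s (b^2 + e^2))/2 for every s > 0, since
   (a -+ s b)^2 + (c -+ s e)^2 >= 0. *)
Lemma weighted_cauchy a b c e s : 0 < s ->
  Rabs (a * b + c * e) <= ((a * a + c * c) / s + s * (b * b + e * e)) / 2.
Proof.
  intros Hs. apply Rabs_le.
  replace (((a * a + c * c) / s + s * (b * b + e * e)) / 2)
    with ((a * a + c * c + s * s * (b * b + e * e)) * / (2 * s)) by (field; lra).
  assert (Hk : 0 < / (2 * s)) by (apply Rinv_0_lt_compat; lra).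
  assert (Hkk : / (2 * s) * (2 * s) = 1) by (field; lra).
  pose proof (Rmult_le_pos _ _ (Rlt_le _ _ Hk)
    (Rplus_le_le_0_compat _ _ (Rle_0_sqr (a - s * b)) (Rle_0_sqr (c - s * e)))).
  pose proof (Rmult_le_pos _ _ (Rlt_le _ _ Hk)
    (Rplus_le_le_0_compat _ _ (Rle_0_sqr (a + s * b)) (Rle_0_sqr (c + s * e)))).
  unfold Rsqr in *. split; nra.
Qed.

Lemma conj_mul_bound (x u : Cplx) s : 0 < s ->
  Rabs (Re (Cmul (Cconj x) u)) <= (Cnorm2 x / s + s * Cnorm2 u) / 2 /\
  Rabs (Im (Cmul (Cconj x) u)) <= (Cnorm2 x / s + s * Cnorm2 u) / 2.
Proof.
  intros Hs. unfold Cnorm2. simpl. split.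
  - replace (Re x * Re u - - Im x * Im u) with (Re x * Re u + Im x * Im u) by ring.
    apply weighted_cauchy; assumption.
  - replace (Re x * Re x + Im x * Im x) with (Re x * Re x + (- Im x) * (- Im x)) by ring.
    replace (Re u * Re u + Im u * Im u) with (Im u * Im u + Re u * Re u) by ring.
    apply weighted_cauchy; assumption.
Qed.

Lemma Cadd_parts_bound (z w : Cplx) A B :
  Rabs (Re z) <= A /\ Rabs (Im z) <= A -> Rabs (Re w) <= B /\ Rabs (Im w) <= B ->
  Rabs (Re (Cadd z w)) <= A + B /\ Rabs (Im (Cadd z w)) <= A + B.
Proof.
  simpl. intros [Hz1 Hz2] [Hw1 Hw2].
  pose proof (Rabs_triang (Re z) (Re w)). pose proof (Rabs_triang (Im z) (Im w)). lra.
Qed.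

Lemma Csum_parts_bound (f : nat -> Cplx) (g : nat -> R) n :
  (forall l, Rabs (Re (f l)) <= g l /\ Rabs (Im (f l)) <= g l) ->
  Rabs (Re (Csum f n)) <= sum_f_R0 g n /\ Rabs (Im (Csum f n)) <= sum_f_R0 g n.
Proof.
  intros Hf. induction n as [|n IH]; [apply Hf|]. apply Cadd_parts_bound; auto.
Qed.

Lemma inner_bound (x u : vec) n s : 0 < s ->
  Rabs (Re (inner_partial x u n)) <= (norm2_partial x n / s + s * norm2_partial u n) / 2 /\
  Rabs (Im (inner_partial x u n)) <= (norm2_partial x n / s + s * norm2_partial u n) / 2.
Proof.
  intros Hs.
  set (g := fun l => (dsum (fun d => Cnorm2 (x l d)) / s + s * dsum (fun d => Cnorm2 (u l d))) / 2).
  replace ((norm2_partial x n / s + s * norm2_partial u n) / 2) with (sum_f_R0 g n).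
  2:{ unfold norm2_partial, g. induction n as [|n IH]; simpl; [reflexivity|].
      rewrite IH. field. lra. }
  apply Csum_parts_bound. intros l.
  replace (g l) with
    ((Cnorm2 (x l DL) / s + s * Cnorm2 (u l DL)) / 2 + (Cnorm2 (x l DO) / s + s * Cnorm2 (u l DO)) / 2
     + (Cnorm2 (x l DR) / s + s * Cnorm2 (u l DR)) / 2) by (unfold g, dsum; field; lra).
  unfold dsumC.
  repeat apply Cadd_parts_bound; apply conj_mul_bound; assumption.
Qed.

Lemma ortho_of_approx (w u : vec) (B : R) :
  (forall n, norm2_partial u n <= B) ->
  (forall eps, 0 < eps -> exists v N, norm2_le (vsub w v) eps /\
      forall n, (N <= n)%nat -> inner_partial v u n = C0) ->
  ortho w u.
Proof.
  intros HB Happ.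
  assert (HB0 : 0 <= B) by (eapply Rle_trans; [apply (norm2_nonneg u 0) | apply HB]).
  assert (Hsmall : forall delta, 0 < delta -> exists N, forall n, (N <= n)%nat ->
     Rabs (Re (inner_partial w u n)) < delta /\ Rabs (Im (inner_partial w u n)) < delta).
  { intros delta Hd. set (s := delta / (B + 1)).
    assert (Hs : 0 < s) by (apply Rdiv_lt_0_compat; lra).
    assert (HsB : s * B < delta).
    { unfold s. apply (Rmult_lt_reg_r (B + 1)); [lra|]. field_simplify; [nra | lra]. }
    destruct (Happ (delta * s / 2)) as [v [N [Happrox Hortho]]]; [nra|].
    exists N. intros n Hn.
    assert (Hsplit : inner_partial w u n = inner_partial (vsub w v) u n).
    { rewrite (inner_ext w (vadd (vsub w v) v)) by (intros; unfold vadd, vsub, Csub; Cring).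
      rewrite inner_add, Hortho by assumption. Cring. }
    assert (Hbound : (norm2_partial (vsub w v) n / s + s * norm2_partial u n) / 2 < delta).
    { assert (norm2_partial (vsub w v) n / s <= delta / 2).
      { apply (Rmult_le_reg_r s); [assumption|]. unfold Rdiv.
        rewrite Rmult_assoc, Rinv_l by lra. specialize (Happrox n). lra. }
      assert (s * norm2_partial u n <= s * B) by (apply Rmult_le_compat_l; [lra | apply HB]).
      lra. }
    rewrite Hsplit. destruct (inner_bound (vsub w v) u n s Hs). split; lra. }
  split; intros eps Heps; destruct (Hsmall eps Heps) as [N HN]; exists N; intros n Hn;
    unfold R_dist; rewrite Rminus_0_r; apply HN; lia.
Qed.

Lemma ortho_eventually (w u : vec) (N : nat) (z : Cplx) :
  ortho w u -> (forall n, (N <= n)%nat -> inner_partial w u n = z) -> z = C0.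
Proof.
  intros [HRe HIm] Hz. apply Cext; simpl.
  - apply (cv_eventually_const _ N _ HRe). intros n Hn. rewrite Hz by assumption. reflexivity.
  - apply (cv_eventually_const _ N _ HIm). intros n Hn. rewrite Hz by assumption. reflexivity.
Qed.

(** H^(S) as the space of balanced vectors *)

Section Orthogonality.

Variables p q r : nat -> R.
Hypothesis Hr : forall j, 0 <= r j.
Hypothesis Hq0 : q 0%nat = 0.

(* <a_j, f> and <b_j, f> = <a_j, S f> for a real field f on the arcs. *)
Definition EA (f : nat -> dir -> R) (j : nat) : R :=
  sqrt (q j) * f j DL + sqrt (r j) * f j DO + sqrt (p j) * f j DR.
Definition EB (f : nat -> dir -> R) (j : nat) : R :=
  (match j with O => 0 | S j' => sqrt (q j) * f j' DR end)
  + sqrt (r j) * f j DO + sqrt (p j) * f (S j) DL.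

Definition balanced (f : nat -> dir -> R) : Prop := forall j, EA f j = 0 /\ EB f j = 0.

Definition balancedC (u : vec) : Prop := balanced (ReF u) /\ balanced (ImF u).

Lemma balanced_ext (f g : nat -> dir -> R) :
  (forall l d, f l d = g l d) -> balanced g -> balanced f.
Proof.
  intros Hfg Hg j. destruct (Hg j) as [HA HB]. unfold EA, EB in *.
  destruct j; rewrite !Hfg; split; assumption.
Qed.

Lemma balancedC_ext (u v : vec) :
  (forall l d, u l d = v l d) -> balancedC v -> balancedC u.
Proof.
  intros Huv [HRe HIm].
  split; [apply (balanced_ext _ (ReF v)) | apply (balanced_ext _ (ImF v))]; try assumption;
    intros l d; unfold ReF, ImF; rewrite Huv; reflexivity.
Qed.

Lemma balanced_zero : balanced (fun _ _ => 0).
Proof. intros j. unfold EA, EB. destruct j; split; ring. Qed.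

Lemma balanced_sub (f g : nat -> dir -> R) :
  balanced f -> balanced g -> balanced (fun l d => f l d - g l d).
Proof.
  intros Hf Hg j. destruct (Hf j), (Hg j). unfold EA, EB in *. destruct j; split; lra.
Qed.

Lemma a_vec_off j l d : l <> j -> a_vec p q r j l d = C0.
Proof. intros H. unfold a_vec, vR. rewrite (proj2 (Nat.eqb_neq _ _) H). reflexivity. Qed.

Lemma b_vec_off j l d : (S j < l)%nat -> b_vec p q r j l d = C0.
Proof.
  intros H. unfold b_vec, shift.
  destruct d; [destruct l; [lia|] | |]; apply a_vec_off; lia.
Qed.

Lemma ipR_a j g n : (j <= n)%nat -> ipR (a_vec p q r j) g n = EA g j.
Proof.
  intros H. unfold ipR. rewrite (sum_single _ j n H).
  - unfold dsum, EA, a_vec, vR, RtoC. simpl. rewrite Nat.eqb_refl. reflexivity.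
  - intros l Hl. unfold dsum. rewrite !a_vec_off by assumption. simpl. ring.
Qed.

Lemma ipR_b j g n : (S j <= n)%nat -> ipR (b_vec p q r j) g n = EB g j.
Proof.
  intros H. unfold ipR, dsum. rewrite !sum_plus.
  rewrite (sum_single (fun l => Re (b_vec p q r j l DL) * g l DL) (S j) n H).
  2:{ intros l Hl. destruct l; [simpl; ring|]. unfold b_vec, shift.
      rewrite a_vec_off by lia. simpl. ring. }
  rewrite (sum_single (fun l => Re (b_vec p q r j l DO) * g l DO) j n) by
    (lia || (intros l Hl; unfold b_vec, shift; rewrite a_vec_off by lia; simpl; ring)).
  unfold EB, b_vec, shift, a_vec, vR, RtoC; simpl. rewrite !Nat.eqb_refl.
  destruct j as [|j'].
  - rewrite sum_eq_R0 by (intros; ring). ring.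
  - rewrite (sum_single _ j' n) by
      (lia || (intros l Hl; rewrite (proj2 (Nat.eqb_neq _ _)) by lia; ring)).
    rewrite Nat.eqb_refl. ring.
Qed.

Lemma inner_a (u : vec) j n : (j <= n)%nat ->
  inner_partial (a_vec p q r j) u n = mkC (EA (ReF u) j) (EA (ImF u) j).
Proof. intros H. rewrite inner_real by reflexivity. rewrite !ipR_a by assumption. reflexivity. Qed.

Lemma inner_b (u : vec) j n : (S j <= n)%nat ->
  inner_partial (b_vec p q r j) u n = mkC (EB (ReF u) j) (EB (ImF u) j).
Proof.
  intros H. rewrite inner_real by (intros l d; destruct d, l; reflexivity).
  rewrite !ipR_b by assumption. reflexivity.
Qed.

Lemma inner_comb_ab_zero (u : vec) (c e : nat -> Cplx) N n :
  balancedC u -> (N <= n)%nat -> inner_partial (comb_ab p q r c e N) u n = C0.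
Proof.
  intros [HRe HIm]. revert n. induction N as [|N IH]; intros n Hn.
  - apply inner_zero_l. reflexivity.
  - change (inner_partial (vadd (comb_ab p q r c e N)
      (vadd (vscale (c N) (a_vec p q r N)) (vscale (e N) (b_vec p q r N)))) u n = C0).
    rewrite !inner_add, !inner_scale, IH, inner_a, inner_b by lia.
    destruct (HRe N) as [HRa HRb]. destruct (HIm N) as [HIa HIb].
    rewrite HRa, HRb, HIa, HIb. Cring.
Qed.

Lemma ortho_HR_of_balanced (u : vec) (B : R) :
  balancedC u -> (forall n, norm2_partial u n <= B) ->
  forall w, in_HR p q r w -> ortho w u.
Proof.
  intros Hbal HB w [_ Hw]. apply (ortho_of_approx w u B HB).
  intros eps Heps. destruct (Hw eps Heps) as [c [e [N HN]]].
  exists (comb_ab p q r c e N), N. split; [assumption|].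
  intros n Hn. apply inner_comb_ab_zero; assumption.
Qed.

Lemma span_A_in_HR (w : vec) : in_span_A p q r w -> in_HR p q r w.
Proof.
  intros [Hl2 Hw]. split; [assumption|]. intros eps Heps.
  destruct (Hw eps Heps) as [c [N HN]]. exists c, (fun _ => C0), N. intros n.
  rewrite (norm2_ext _ (vsub w (comb_a p q r c N))); [apply HN|].
  intros l d. unfold vsub, comb_a, comb_ab. f_equal. clear HN.
  induction N as [|N IH]; simpl; [reflexivity|]. rewrite IH. Cring.
Qed.

Lemma l2_of_finite_support (u : vec) (M : nat) :
  (forall j d, ~ valid_arc r j d -> u j d = C0) ->
  (forall l d, (M < l)%nat -> u l d = C0) -> in_l2 r u.
Proof.
  intros Harcs Hfin. split; [assumption|]. exists (norm2_partial u M).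
  apply sum_le_support; [intros; apply dsum_norm2_nonneg|].
  intros l Hl. unfold dsum, Cnorm2. rewrite !Hfin by assumption. simpl. ring.
Qed.

Lemma single_in_HR (h : vec) j (al be : Cplx) :
  in_l2 r h ->
  (forall l d, h l d = Cadd (Cmul al (a_vec p q r j l d)) (Cmul be (b_vec p q r j l d))) ->
  in_HR p q r h.
Proof.
  intros Hl2 Hh. split; [assumption|]. intros eps Heps.
  set (at_j := fun (z : Cplx) i => if Nat.eqb i j then z else C0).
  exists (at_j al), (at_j be), (S j). intros n.
  rewrite norm2_zero; [lra|]. intros l d. unfold vsub, comb_ab.
  rewrite (Csum_lt_single _ j) by
    (lia || (intros i Hi; unfold at_j; rewrite (proj2 (Nat.eqb_neq _ _) Hi); Cring)).
  unfold at_j. rewrite Nat.eqb_refl, Hh. Cring.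
Qed.

Lemma a_in_HR j : in_HR p q r (a_vec p q r j).
Proof.
  apply (single_in_HR _ j (RtoC 1) C0); [|intros; Cring].
  apply (l2_of_finite_support _ j); [|intros; apply a_vec_off; lia].
  intros l d Hv. destruct (Nat.eq_dec l j) as [->|Hne]; [|apply a_vec_off; assumption].
  unfold a_vec, vR. rewrite Nat.eqb_refl.
  destruct d; simpl in Hv.
  - replace j with 0%nat by lia. rewrite Hq0, sqrt_0. reflexivity.
  - replace (r j) with 0 by (specialize (Hr j); lra). rewrite sqrt_0. reflexivity.
  - tauto.
Qed.

Lemma b_in_HR j : in_HR p q r (b_vec p q r j).
Proof.
  apply (single_in_HR _ j C0 (RtoC 1)); [|intros; Cring].
  apply (l2_of_finite_support _ (S j)); [|intros; apply b_vec_off; lia].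
  intros l d Hv. destruct d; simpl in Hv.
  - replace l with 0%nat by lia. reflexivity.
  - unfold b_vec, shift, a_vec, vR.
    destruct (Nat.eqb_spec l j) as [->|]; [|reflexivity].
    replace (r j) with 0 by (specialize (Hr j); lra). rewrite sqrt_0. reflexivity.
  - tauto.
Qed.

Lemma balanced_of_HS (u : vec) : in_HS p q r u -> balancedC u.
Proof.
  intros [_ Hort].
  assert (Ha : forall j, mkC (EA (ReF u) j) (EA (ImF u) j) = C0)
    by (intros j; apply (ortho_eventually _ _ j _ (Hort _ (a_in_HR j))), inner_a).
  assert (Hb : forall j, mkC (EB (ReF u) j) (EB (ImF u) j) = C0)
    by (intros j; apply (ortho_eventually _ _ (S j) _ (Hort _ (b_in_HR j))), inner_b).
  split; intros j; specialize (Ha j); specialize (Hb j); unfold C0 in Ha, Hb;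
    injection Ha; injection Hb; auto.
Qed.

Lemma projA_of_balanced (u : vec) (B : R) :
  balancedC u -> (forall n, norm2_partial u n <= B) -> is_projA p q r u vzero.
Proof.
  intros Hbal HB. split; [split|].
  - apply (l2_of_finite_support vzero 0); reflexivity.
  - intros eps Heps. exists (fun _ => C0), 0%nat. intros n.
    rewrite norm2_zero by (intros; unfold vsub, vzero, comb_a; Cring). lra.
  - intros x Hx. apply (ortho_HR_of_balanced _ B); [| |apply span_A_in_HR; assumption].
    + apply (balancedC_ext _ u); [intros; unfold vsub, vzero; Cring | assumption].
    + intros n. rewrite (norm2_ext _ u) by (intros; unfold vsub, vzero; Cring). apply HB.
Qed.

Lemma U_eigen_minus_one (u : vec) :
  is_projA p q r u vzero -> (forall l d, shift u l d = u l d) -> U_rel p q r u (vopp u).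
Proof.
  intros Hproj Hinv. exists vzero. split; [assumption|]. intros l d.
  unfold vopp. rewrite <- (Hinv l d).
  unfold shift, vsub, vadd, Csub, vzero. destruct d; [destruct l|..]; Cring.
Qed.

End Orthogonality.

(** The vectors eta_k and the representation of balanced fields *)

Lemma posb_true x : 0 < x -> posb x = true.
Proof. intros H. unfold posb. destruct (Rlt_dec 0 x); [reflexivity | lra]. Qed.

Lemma posb_false x : ~ 0 < x -> posb x = false.
Proof. intros H. unfold posb. destruct (Rlt_dec 0 x); [contradiction | reflexivity]. Qed.

Lemma sg_S j : sg (S j) = - sg j.
Proof. unfold sg. simpl. ring. Qed.

Lemma prod1_pos (f : nat -> R) : (forall k, (1 <= k)%nat -> 0 < f k) -> forall n, 0 < prod1 f n.
Proof.
  intros H n. induction n as [|n IH]; simpl; [lra|].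
  apply Rmult_lt_0_compat; [assumption | apply H; lia].
Qed.

(* sqrt a * sqrt (b x / a) = sqrt b * sqrt x: the two O-arc entries of eta. *)
Lemma sqrt_cancel a b x : 0 < a -> 0 <= b -> 0 <= x -> sqrt a * sqrt (b * x / a) = sqrt b * sqrt x.
Proof.
  intros Ha Hb Hx. rewrite <- sqrt_mult_alt by lra. rewrite <- sqrt_mult by assumption.
  f_equal. field. lra.
Qed.

Lemma sqrt_mult_eq0 a x : 0 < a -> sqrt a * x = 0 -> x = 0.
Proof.
  intros Ha H. pose proof (sqrt_lt_R0 _ Ha). destruct (Rmult_integral _ _ H); lra.
Qed.

Section Eta.

Variables p q r : nat -> R.
Hypothesis Hq : forall j, 0 <= q j.
Hypothesis Hq0 : q 0%nat = 0.
Hypothesis Hppos : forall j, 0 < p j.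
Hypothesis Hqpos : forall j, (1 <= j)%nat -> 0 < q j.

Lemma no_S_between_S j l : (j < l)%nat ->
  no_S_between r j (S l) = andb (no_S_between r j l) (negb (posb (r l))).
Proof.
  intros H. unfold no_S_between. replace (S l - S j)%nat with (S (l - S j)) by lia.
  rewrite seq_S, forallb_app. simpl. rewrite Bool.andb_true_r.
  replace (S (j + (l - S j))) with l by lia. reflexivity.
Qed.

Lemma no_S_between_succ j : no_S_between r j (S j) = true.
Proof. unfold no_S_between. rewrite Nat.sub_diag. reflexivity. Qed.

Lemma qt_pos j : 0 < qt q j.
Proof. destruct j; simpl; [lra | apply Hqpos; lia]. Qed.

Lemma Qc_pos j : 0 < Qc p q j.
Proof.
  assert (Pp := prod1_pos p (fun k _ => Hppos k)). assert (Pq := prod1_pos q Hqpos).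
  destruct j as [|j]; simpl; [lra|]. apply sqrt_lt_R0.
  assert (0 < q (S j)) by (apply Hqpos; lia).
  apply Rdiv_lt_0_compat; [apply Rmult_lt_0_compat | apply Rmult_lt_0_compat]; auto.
  apply Rmult_lt_0_compat; auto.
Qed.

(* The recursion Q_{m+1} sqrt p_{m+1} = Q_m sqrt(tilde q_m) behind eta's
   continuity across each vertex. *)
Lemma Qc_rec m : Qc p q (S m) * sqrt (p (S m)) = Qc p q m * sqrt (qt q m).
Proof.
  assert (Pp := prod1_pos p (fun k _ => Hppos k)). assert (Pq := prod1_pos q Hqpos).
  assert (HqS : 0 < q (S m)) by (apply Hqpos; lia). assert (HpS := Hppos (S m)).
  unfold Qc at 1. simpl prod1. rewrite <- sqrt_mult_alt.
  2:{ left. apply Rdiv_lt_0_compat; [apply Rmult_lt_0_compat; auto|].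
      apply Rmult_lt_0_compat; [apply Rmult_lt_0_compat|]; auto. }
  destruct m as [|k].
  - simpl. transitivity (sqrt 1); [f_equal; field; lra | rewrite sqrt_1; ring].
  - assert (Hqk : 0 < q (S k)) by (apply Hqpos; lia).
    unfold Qc, qt. rewrite <- sqrt_mult_alt.
    2:{ left. apply Rdiv_lt_0_compat; [apply Pq|]. apply Rmult_lt_0_compat; auto. }
    f_equal. specialize (Pp (S k)). specialize (Pq (S k)). field. lra.
Qed.

(* The value of eta_l on its own R arc. *)
Definition lead (l : nat) : R := sg l * Qc p q l * sqrt (qt q l).

Lemma lead_neq0 l : lead l <> 0.
Proof.
  unfold lead. assert (sg l <> 0) by (unfold sg; apply pow_nonzero; lra).
  pose proof (Qc_pos l). pose proof (sqrt_lt_R0 _ (qt_pos l)).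
  apply Rmult_integral_contrapositive_currified; [|lra].
  apply Rmult_integral_contrapositive_currified; lra.
Qed.

Lemma eta_before i l d : (l < i)%nat -> eta p q r i l d = 0.
Proof.
  intros H. unfold eta. destruct (negb (posb (r i))); [reflexivity|].
  rewrite (proj2 (Nat.eqb_neq l i)), (proj2 (Nat.ltb_ge i l)) by lia. reflexivity.
Qed.

Lemma eta_self_L i : eta p q r i i DL = 0.
Proof. unfold eta. destruct (negb (posb (r i))); [|rewrite Nat.eqb_refl]; reflexivity. Qed.

Lemma eta_0L i : eta p q r i 0 DL = 0.
Proof. destruct i as [|i]; [apply eta_self_L | apply eta_before; lia]. Qed.

Lemma eta_O_off i l : ~ 0 < r l -> eta p q r i l DO = 0.
Proof.
  intros H. unfold eta. destruct (Nat.eqb_spec l i) as [->|Hne].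
  - rewrite posb_false by assumption. reflexivity.
  - destruct (negb (posb (r i))); [reflexivity|].
    destruct (andb (Nat.ltb i l) (no_S_between r i l)); [|reflexivity].
    rewrite posb_false by assumption. reflexivity.
Qed.

Lemma eta_R_other i l : 0 < r l -> i <> l -> eta p q r i l DR = 0.
Proof.
  intros H Hne. unfold eta. destruct (negb (posb (r i))); [reflexivity|].
  rewrite (proj2 (Nat.eqb_neq l i)) by lia.
  destruct (andb (Nat.ltb i l) (no_S_between r i l)); [rewrite posb_true by assumption|];
    reflexivity.
Qed.

Lemma eta_R_self l : 0 < r l -> eta p q r l l DR = lead l.
Proof. intros H. unfold eta. rewrite posb_true by assumption. simpl. rewrite Nat.eqb_refl. reflexivity. Qed.

Lemma eta_EA i j : EA p q r (eta p q r i) j = 0.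
Proof.
  unfold EA, eta. destruct (posb (r i)) eqn:Hi; simpl negb; cbv iota; [|ring].
  assert (Hri : 0 < r i) by (unfold posb in Hi; destruct (Rlt_dec 0 (r i)); [assumption | discriminate]).
  destruct (Nat.eqb_spec j i) as [->|Hne].
  - transitivity (sg i * Qc p q i * (sqrt (p i) * sqrt (qt q i)
                   - sqrt (r i) * sqrt (p i * qt q i / r i))); [ring|].
    rewrite sqrt_cancel by (auto; left; auto using qt_pos). ring.
  - destruct (andb _ _); [|ring].
    destruct (posb (r j)) eqn:Hj; [|ring].
    assert (Hrj : 0 < r j) by (unfold posb in Hj; destruct (Rlt_dec 0 (r j)); [assumption | discriminate]).
    transitivity (sg j * Qc p q j * (sqrt (r j) * sqrt (p j * q j / r j)
                   - sqrt (q j) * sqrt (p j))); [ring|].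
    rewrite sqrt_cancel by (auto; left; auto). ring.
Qed.

Lemma eta_shift i l : eta p q r i l DR = eta p q r i (S l) DL.
Proof.
  unfold eta. destruct (negb (posb (r i))); [reflexivity|].
  destruct (Nat.lt_total l i) as [Hlt|[->|Hgt]].
  - rewrite (proj2 (Nat.eqb_neq l i)), (proj2 (Nat.ltb_ge i l)) by lia.
    destruct (Nat.eqb_spec (S l) i); [reflexivity|].
    rewrite (proj2 (Nat.ltb_ge i (S l))) by lia. reflexivity.
  - rewrite Nat.eqb_refl, (proj2 (Nat.eqb_neq (S i) i)), (proj2 (Nat.ltb_lt i (S i))),
      no_S_between_succ by lia.
    simpl andb. assert (E := Qc_rec i). rewrite sg_S.
    destruct (posb (r (S i)));
      (transitivity (sg i * (Qc p q i * sqrt (qt q i))); [ring | rewrite <- E; ring]).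
  - rewrite (proj2 (Nat.eqb_neq l i)), (proj2 (Nat.eqb_neq (S l) i)),
      (proj2 (Nat.ltb_lt i l)), (proj2 (Nat.ltb_lt i (S l))), no_S_between_S by lia.
    destruct (no_S_between r i l), (posb (r l)); cbn [andb negb]; try reflexivity.
    assert (E := Qc_rec l). destruct l as [|l]; [lia|]. simpl qt in E. rewrite !sg_S.
    destruct (posb (r (S (S l))));
      (transitivity (- sg l * (Qc p q (S l) * sqrt (q (S l)))); [ring | rewrite <- E; ring]).
Qed.

Lemma EB_of_EA (f : nat -> dir -> R) j :
  (forall l, f l DR = f (S l) DL) -> EA p q r f j = 0 -> EB p q r f j = 0.
Proof.
  intros Hshift HA. unfold EA, EB in *. rewrite <- Hshift. destruct j as [|j].
  - rewrite Hq0, sqrt_0 in HA. lra.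
  - rewrite Hshift. lra.
Qed.

Lemma eta_balanced i : balanced p q r (eta p q r i).
Proof. intros j. split; [|apply EB_of_EA; [apply eta_shift|]]; apply eta_EA. Qed.

Definition realcomb (x : nat -> R) : nat -> dir -> R :=
  fun l d => sum_f_R0 (fun i => x i * eta p q r i l d) l.

Lemma realcomb_wide x l d N : (l <= N)%nat ->
  realcomb x l d = sum_f_R0 (fun i => x i * eta p q r i l d) N.
Proof.
  intros H. unfold realcomb. induction N as [|N IH].
  - replace l with 0%nat by lia. reflexivity.
  - destruct (Nat.eq_dec l (S N)) as [->|Hne]; [reflexivity|].
    simpl. rewrite IH, eta_before by lia. ring.
Qed.

(* Combinations of the eta_i are balanced: linearity and shift invariance. *)
Lemma realcomb_balanced x : balanced p q r (realcomb x).
Proof.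
  assert (HA : forall j, EA p q r (realcomb x) j = 0).
  { intros j. unfold EA, realcomb. rewrite !scal_sum, <- !plus_sum.
    apply sum_eq_R0. intros i _. pose proof (eta_EA i j) as E. unfold EA in E.
    transitivity (x i * (sqrt (q j) * eta p q r i j DL + sqrt (r j) * eta p q r i j DO
                         + sqrt (p j) * eta p q r i j DR)); [ring|].
    rewrite E. ring. }
  assert (Hshift : forall l, realcomb x l DR = realcomb x (S l) DL).
  { intros l. rewrite (realcomb_wide x (S l) DL (S l)) by lia. simpl sum_f_R0.
    rewrite eta_self_L.
    replace (x (S l) * 0) with 0 by ring. rewrite Rplus_0_r.
    apply sum_eq. intros i _. rewrite eta_shift. reflexivity. }
  intros j. split; [|apply EB_of_EA]; auto.
Qed.

Definition supported (f : nat -> dir -> R) : Prop :=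
  f 0%nat DL = 0 /\ forall l, ~ 0 < r l -> f l DO = 0.

Lemma l2_supported (u : vec) : in_l2 r u -> supported (ReF u) /\ supported (ImF u).
Proof.
  intros [Harcs _]. unfold supported, ReF, ImF.
  rewrite Harcs by (simpl; lia). repeat split; intros l Hl; rewrite Harcs by assumption; reflexivity.
Qed.

Lemma realcomb_supported x : supported (realcomb x).
Proof.
  split.
  - unfold realcomb. simpl. rewrite eta_0L. ring.
  - intros l Hl. unfold realcomb. apply sum_eq_R0. intros i _. rewrite eta_O_off by assumption. ring.
Qed.

Lemma realcomb_R x l : 0 < r l -> realcomb x l DR = x l * lead l.
Proof.
  intros H. unfold realcomb. rewrite <- eta_R_self by assumption.
  apply (sum_single (fun i => x i * eta p q r i l DR)); [lia|].
  intros i Hi. rewrite eta_R_other by auto. ring.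
Qed.

(* The equations at vertex l propagate
   the vanishing from |l;L> (and the arc entering from the left) to |l;O>,
   |l;R> and |l+1;L>. *)
Lemma balanced_unique (f : nat -> dir -> R) :
  balanced p q r f -> supported f -> (forall l, 0 < r l -> f l DR = 0) ->
  forall l d, f l d = 0.
Proof.
  intros Hbal [H0 HO] HR.
  assert (Hvertex : forall l, f l DL = 0 ->
      (match l with O => 0 | S l' => sqrt (q l) * f l' DR end) = 0 ->
      f l DO = 0 /\ f l DR = 0 /\ f (S l) DL = 0).
  { intros l HL Hin. destruct (Hbal l) as [HA HB]. unfold EA, EB in HA, HB.
    rewrite HL in HA.
    assert (HOR : f l DO = 0 /\ f l DR = 0).
    { destruct (Rlt_dec 0 (r l)) as [Hpos|Hnpos].
      - pose proof (HR l Hpos) as E. rewrite E in HA.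
        split; [apply (sqrt_mult_eq0 (r l)); [assumption | lra] | assumption].
      - pose proof (HO l Hnpos) as E. rewrite E in HA.
        split; [assumption | apply (sqrt_mult_eq0 (p l)); [apply Hppos | lra]]. }
    destruct HOR as [EO ER]. rewrite Hin, EO in HB.
    repeat split; try assumption. apply (sqrt_mult_eq0 (p l)); [apply Hppos | lra]. }
  assert (Hall : forall l, f l DL = 0 /\ f l DO = 0 /\ f l DR = 0 /\ f (S l) DL = 0).
  { induction l as [|l IH].
    - destruct (Hvertex 0%nat H0 eq_refl) as [A [B C]]. auto.
    - destruct IH as [_ [_ [ER EL]]].
      destruct (Hvertex (S l) EL) as [A [B C]]; [rewrite ER; ring | auto]. }
  intros l d. destruct (Hall l) as [A [B [C _]]]. destruct d; assumption.
Qed.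

Lemma balanced_representation (f : nat -> dir -> R) :
  balanced p q r f -> supported f ->
  forall l d, f l d = realcomb (fun i => f i DR / lead i) l d.
Proof.
  intros Hbal [H0 HO] l d. apply Rminus_diag_uniq.
  destruct (realcomb_supported (fun i => f i DR / lead i)) as [R0 RO].
  apply (balanced_unique (fun l d => f l d - realcomb (fun i => f i DR / lead i) l d)).
  - apply balanced_sub; [assumption | apply realcomb_balanced].
  - split; [rewrite H0, R0; ring|]. intros m Hm. rewrite HO, RO by assumption. ring.
  - intros m Hm. rewrite realcomb_R by assumption. field. apply lead_neq0.
Qed.

Lemma Re_eta_comb c l d : Re (eta_comb p q r c l d) = realcomb (fun i => Re (c i)) l d.
Proof. unfold eta_comb, realcomb. rewrite Re_Csum. apply sum_eq. intros. simpl. ring. Qed.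

Lemma Im_eta_comb c l d : Im (eta_comb p q r c l d) = realcomb (fun i => Im (c i)) l d.
Proof. unfold eta_comb, realcomb. rewrite Im_Csum. apply sum_eq. intros. simpl. ring. Qed.

Lemma eta_comb_balanced c : balancedC p q r (eta_comb p q r c).
Proof.
  split; [apply (balanced_ext _ _ _ _ (realcomb (fun i => Re (c i))))
         | apply (balanced_ext _ _ _ _ (realcomb (fun i => Im (c i))))];
    try apply realcomb_balanced; intros l d; [apply Re_eta_comb | apply Im_eta_comb].
Qed.

Lemma etaC_balanced i : balancedC p q r (etaC p q r i).
Proof. split; [apply eta_balanced | apply balanced_zero]. Qed.

Lemma etaC_shift i l d : shift (etaC p q r i) l d = etaC p q r i l d.
Proof.
  unfold shift, etaC, vR. destruct d.
  - destruct l as [|l]; [rewrite eta_0L | rewrite eta_shift]; reflexivity.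
  - reflexivity.
  - rewrite eta_shift. reflexivity.
Qed.

End Eta.

Theorem lemma3 (p q r : nat -> R)
  (Hp : forall j, 0 <= p j) (Hq : forall j, 0 <= q j) (Hr : forall j, 0 <= r j)
  (Hsum : forall j, p j + q j + r j = 1)
  (Hq0 : q 0%nat = 0)
  (Hppos : forall j, 0 < p j)
  (Hqpos : forall j, (1 <= j)%nat -> 0 < q j) :
  (forall phi : vec, in_l2 r phi ->
     (in_HS p q r phi <->
      exists c : nat -> Cplx, forall l d, phi l d = eta_comb p q r c l d))
  /\ ((forall j, ~ 0 < r j) ->
      forall phi : vec, in_HS p q r phi -> forall l d, phi l d = C0)
  /\ (forall j, 0 < r j -> in_l2 r (etaC p q r j) ->
      U_rel p q r (etaC p q r j) (vopp (etaC p q r j))).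
Proof.
  split; [|split].
  - intros phi Hl2. destruct (l2_supported r phi Hl2) as [SRe SIm]. split.
    + (* phi is the eta-combination with coefficients read off on the R arcs. *)
      intros HS. destruct (balanced_of_HS p q r Hr Hq0 phi HS) as [BRe BIm].
      exists (fun i => mkC (Re (phi i DR) / lead p q i) (Im (phi i DR) / lead p q i)).
      intros l d. apply Cext.
      * rewrite Re_eta_comb. exact (balanced_representation p q r Hq Hq0 Hppos Hqpos _ BRe SRe l d).
      * rewrite Im_eta_comb. exact (balanced_representation p q r Hq Hq0 Hppos Hqpos _ BIm SIm l d).
    + intros [c Hc]. split; [assumption|]. destruct Hl2 as [_ [B HB]].
      apply (ortho_HR_of_balanced p q r phi B); [|assumption].
      apply (balancedC_ext _ _ _ _ _ Hc), eta_comb_balanced; assumption.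
  - intros Hempty phi HS. destruct (balanced_of_HS p q r Hr Hq0 phi HS) as [BRe BIm].
    destruct (l2_supported r phi (proj1 HS)) as [SRe SIm].
    intros l d. apply Cext;
      [apply (balanced_unique p q r Hppos (ReF phi)) | apply (balanced_unique p q r Hppos (ImF phi))];
      try assumption; intros m Hm; contradiction (Hempty m).
  - (* Pi_A eta_j = 0 since eta_j is orthogonal to H^(R), and S eta_j = eta_j. *)
    intros j Hj [_ [B HB]]. apply U_eigen_minus_one; [|apply etaC_shift; assumption].
    apply (projA_of_balanced p q r _ B); [apply etaC_balanced | ]; assumption.
Qed.
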